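(* Let $d_R\ge2$. (a) If the glue code is compatible with the memory via $S,T$ and finely devised for $\Sigma$, and $\gamma$ satisfies $J_{X,C}S^{\mathrm T}=\gamma H_G$, then $H^{M\text{-}M}_X(J^{M\text{-}M}_Z)^{\mathrm T}=0$, $H^{M\text{-}M}_Z(J^{M\text{-}M}_X)^{\mathrm T}=0$ and $J^{M\text{-}M}_X(J^{M\text{-}M}_Z)^{\mathrm T}=E_{k-q}$. (b) If the glue code is compatible with the memory via $S,T$, then $H^{M\text{-}B}_X(J^{M\text{-}B}_Z)^{\mathrm T}=0$, $H^{M\text{-}B}_Z(J^{M\text{-}B}_X)^{\mathrm T}=0$ and $J^{M\text{-}B}_X(J^{M\text{-}B}_Z)^{\mathrm T}=E_k$.
   Context: All vectors are row vectors over $\mathbb F_2$; $\mathrm{rs}A$ is the row space, $\ker A=\{x:Ax^{\mathrm T}=0\}$, $VM=\{vM:v\in V\}$, $E_m$ the identity. The memory is a CSS subsystem code specified by $H_X\in\mathbb F_2^{r_X\times n}$, $H_Z\in\mathbb F_2^{r_Z\times n}$, $J_X,J_Z\in\mathbb F_2^{k\times n}$, $F_X,F_Z\in\mathbb F_2^{k_g\times n}$ satisfying $\ker H_X=\mathrm{rs}H_Z\oplus\mathrm{rs}J_Z\oplus\mathrm{rs}F_Z$, $\ker H_Z=\mathrm{rs}H_X\oplus\mathrm{rs}J_X\oplus\mathrm{rs}F_X$, $J_XJ_Z^{\mathrm T}=E_k$, $F_XF_Z^{\mathrm T}=E_{k_g}$. Let $v_1,\dots,v_q\in\mathrm{rs}J_Z$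 be linearly independent (representing $\Sigma$), $J_{Z,A}$ the matrix with rows $v_1,\dots,v_q$; extend to a basis $v_1,\dots,v_k$ of $\mathrm{rs}J_Z$ and let $J_{Z,C}$ have rows $v_{q+1},\dots,v_k$. Let $\bar J_Z$ be the invertible $k\times k$ matrix with $\binom{J_{Z,A}}{J_{Z,C}}=\bar J_ZJ_Z$ and define $J_{X,A}\in\mathbb F_2^{q\times n}$, $J_{X,C}\in\mathbb F_2^{(k-q)\times n}$ by $\binom{J_{X,A}}{J_{X,C}}=(\bar J_Z^{-1})^{\mathrm T}J_X$. A glue code $H_G\in\mathbb F_2^{r_G\times n_G}$ is compatible via pasting matrices $S\in\mathbb F_2^{n_G\times n}$, $T\in\mathbb F_2^{r_X\times r_G}$ if $H_XS^{\mathrm T}=TH_G$; it is finely devised for $\Sigma$ if there exist $u_1,u_2,\dots\in\mathrm{rs}H_Z\oplus\mathrm{rs}F_Z$ with $\mathrm{span}(v_1,\dots,v_q,u_1,u_2,\dots)=(\ker H_G)S$. Measurement-sticker deformed code: coordinates are split into blocks $u_0\in\mathbb F_2^n$, $u_1,\dots,u_{d_R-1}\in\mathbb F_2^{n_G}$, $w_1,\dots,w_{d_R}\in\mathbb F_2^{r_G}$. $H^{M\text{-}M}_X$ has row-block $0$ equal to $H_X$ on $u_0$ and $T$ on $w_1$, and for $1\le j\le d_R-1$ row-block $j$ equal to $H_G$ on $u_j$, $E_{r_G}$ on $w_j$ and $E_{r_G}$ on $w_{j+1}$ (zero elsewhere). $H^{M\text{-}M}_Z$ has row-block $0$ equal to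 $H_Z$ on $u_0$, and for $1\le i\le d_R$ row-block $i$ equal to $S$ on $u_0$ (only if $i=1$), $E_{n_G}$ on $u_{i-1}$ (only if $i\ge2$), $E_{n_G}$ on $u_i$ (only if $i\le d_R-1$), and $H_G^{\mathrm T}$ on $w_i$. $J^{M\text{-}M}_X$ equals $J_{X,C}$ on $u_0$, $J_{X,C}S^{\mathrm T}$ on each of $u_1,\dots,u_{d_R-1}$, $0$ on $w_1,\dots,w_{d_R-1}$ and $\gamma$ on $w_{d_R}$; $J^{M\text{-}M}_Z$ equals $J_{Z,C}$ on $u_0$ and $0$ elsewhere. Branch-sticker deformed code: blocks $u_0\in\mathbb F_2^n$, $u_1,\dots,u_{d_R-1}\in\mathbb F_2^{n_G}$, $w_1,\dots,w_{d_R-1}\in\mathbb F_2^{r_G}$. $H^{M\text{-}B}_X$ has row-block $0$ equal to $H_X$ on $u_0$ and $T$ on $w_1$, and for $1\le j\le d_R-1$ row-block $j$ equal to $H_G$ on $u_j$, $E_{r_G}$ on $w_j$ and $E_{r_G}$ on $w_{j+1}$ (the latter only if $j\le d_R-2$). $H^{M\text{-}B}_Z$ has row-block $0$ equal to $H_Z$ on $u_0$, and for $1\le i\le d_R-1$ row-block $i$ equal to $S$ on $u_0$ (only if $i=1$), $E_{n_G}$ on $u_{i-1}$ (only if $i\ge2$), $E_{n_G}$ on $u_i$, and $H_G^{\mathrm T}$ on $w_i$. With $J'_X=\binom{J_{X,A}}{J_{X,C}}$, $J'_Z=\binom{J_{Z,A}}{J_{Z,C}}$: $J^{M\text{-}B}_X$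 equals $J'_X$ on $u_0$, $J'_XS^{\mathrm T}$ on each $u_j$ and $0$ on all $w_j$; $J^{M\text{-}B}_Z$ equals $J'_Z$ on $u_0$ and $0$ elsewhere. *)

From HB Require Import structures.
From mathcomp Require Import all_boot all_order all_algebra.
Set Implicit Arguments. Unset Strict Implicit. Unset Printing Implicit Defensive.
Import GRing.Theory.
Local Open Scope ring_scope.

(* ker A = { x : A x^T = 0 } as a row space: x *m A^T = 0 <-> (x <= kermx A^T) *)
Notation kerF A := (kermx (trmx A)).

Section Deformed.
Variable R : fieldType.
Variables (n rX rZ nG rG dR : nat).

(* ---- Measurement-sticker deformed code ----
   Column blocks: u_0 (size n) | u_1..u_{dR-1} (size nG each, 0-based j <-> u_{j+1})
                  | w_1..w_{dR} (size rG each, 0-based i <-> w_{i+1}). *)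

Definition HX_MM (HX : 'M[R]_(rX, n)) (T : 'M[R]_(rX, rG)) (HG : 'M[R]_(rG, nG))
  : 'M[R]_(rX + \sum_(j < dR.-1) rG, n + (\sum_(j < dR.-1) nG + \sum_(i < dR) rG)) :=
  col_mx
    (row_mx HX (row_mx 0
       (\mxrow_(i < dR) (if (i == 0 :> nat) then T else 0 : 'M[R]_(rX, rG)))))
    (\mxcol_(j < dR.-1) row_mx (0 : 'M[R]_(rG, n)) (row_mx
       (\mxrow_(j' < dR.-1) (if j' == j then HG else 0 : 'M[R]_(rG, nG)))
       (\mxrow_(i < dR) (if (i == j :> nat) || (i == j.+1 :> nat)
                         then 1%:M else 0 : 'M[R]_(rG, rG))))).

Definition HZ_MM (HZ : 'M[R]_(rZ, n)) (S : 'M[R]_(nG, n)) (HG : 'M[R]_(rG, nG))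
  : 'M[R]_(rZ + \sum_(i < dR) nG, n + (\sum_(j < dR.-1) nG + \sum_(i < dR) rG)) :=
  col_mx
    (row_mx HZ 0)
    (\mxcol_(i < dR) row_mx (if (i == 0 :> nat) then S else 0 : 'M[R]_(nG, n)) (row_mx
       (\mxrow_(j < dR.-1) (if (j.+1 == i :> nat) || (j == i :> nat)
                            then 1%:M else 0 : 'M[R]_(nG, nG)))
       (\mxrow_(i' < dR) (if i' == i then HG^T else 0 : 'M[R]_(nG, rG))))).

Definition JX_MM c (JXC : 'M[R]_(c, n)) (S : 'M[R]_(nG, n)) (gamma : 'M[R]_(c, rG))
  : 'M[R]_(c, n + (\sum_(j < dR.-1) nG + \sum_(i < dR) rG)) :=
  row_mx JXC (row_mx
    (\mxrow_(j < dR.-1) (JXC *m S^T))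
    (\mxrow_(i < dR) (if (i == dR.-1 :> nat) then gamma else 0 : 'M[R]_(c, rG)))).

Definition JZ_MM c (JZC : 'M[R]_(c, n))
  : 'M[R]_(c, n + (\sum_(j < dR.-1) nG + \sum_(i < dR) rG)) :=
  row_mx JZC 0.

(* ---- Branch-sticker deformed code ----
   Column blocks: u_0 | u_1..u_{dR-1} | w_1..w_{dR-1} (0-based as above). *)

Definition HX_MB (HX : 'M[R]_(rX, n)) (T : 'M[R]_(rX, rG)) (HG : 'M[R]_(rG, nG))
  : 'M[R]_(rX + \sum_(j < dR.-1) rG, n + (\sum_(j < dR.-1) nG + \sum_(i < dR.-1) rG)) :=
  col_mx
    (row_mx HX (row_mx 0
       (\mxrow_(i < dR.-1) (if (i == 0 :> nat) then T else 0 : 'M[R]_(rX, rG)))))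
    (\mxcol_(j < dR.-1) row_mx (0 : 'M[R]_(rG, n)) (row_mx
       (\mxrow_(j' < dR.-1) (if j' == j then HG else 0 : 'M[R]_(rG, nG)))
       (\mxrow_(i < dR.-1) (if (i == j :> nat) || (i == j.+1 :> nat)
                            then 1%:M else 0 : 'M[R]_(rG, rG))))).

Definition HZ_MB (HZ : 'M[R]_(rZ, n)) (S : 'M[R]_(nG, n)) (HG : 'M[R]_(rG, nG))
  : 'M[R]_(rZ + \sum_(i < dR.-1) nG, n + (\sum_(j < dR.-1) nG + \sum_(i < dR.-1) rG)) :=
  col_mx
    (row_mx HZ 0)
    (\mxcol_(i < dR.-1) row_mx (if (i == 0 :> nat) then S else 0 : 'M[R]_(nG, n)) (row_mx
       (\mxrow_(j < dR.-1) (if (j.+1 == i :> nat) || (j == i :> nat)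
                            then 1%:M else 0 : 'M[R]_(nG, nG)))
       (\mxrow_(i' < dR.-1) (if i' == i then HG^T else 0 : 'M[R]_(nG, rG))))).

Definition JX_MB k (JX' : 'M[R]_(k, n)) (S : 'M[R]_(nG, n))
  : 'M[R]_(k, n + (\sum_(j < dR.-1) nG + \sum_(i < dR.-1) rG)) :=
  row_mx JX' (row_mx (\mxrow_(j < dR.-1) (JX' *m S^T)) 0).

Definition JZ_MB k (JZ' : 'M[R]_(k, n))
  : 'M[R]_(k, n + (\sum_(j < dR.-1) nG + \sum_(i < dR.-1) rG)) :=
  row_mx JZ' 0.

End Deformed.

(* In both deformed codes the Z-logicals are supported on u_0, where the glue
   X-checks vanish, so the X-check relations reduce to H_X J_Z^T = 0 in the
   memory.  For the Z-checks, glue row block i meets the copies J_X S^T of the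
   X-logicals through S (i = 0) and through its two-sided identity band
   (u_(i-1), u_i); in the measurement sticker the last block also meets gamma
   through H_G^T, and gamma H_G = J_X S^T.  Each row block thus collects exactly
   two copies of S J_X^T, which cancel over F_2.  The logical pairing on u_0 is
   that of the memory, transported along the basis change (Jbar^-T, Jbar). *)
From mathcomp Require Import all_boot all_order all_algebra.
From mathcomp Require Import zify.
Import GRing.Theory.
Local Open Scope ring_scope.

Lemma sum_ord_mulrn_eq (V : nmodType) (A : V) m k :
  \sum_(j < m) A *+ (j == k :> nat) = A *+ (k < m)%N.
Proof.
elim: m => [|m IHm]; first by rewrite big_ord0 ltn0.
by rewrite big_ord_recr /= IHm -mulrnDr; congr (_ *+ _); lia.
Qed.

Lemma sum_ord_mulrn_eqS (V : nmodType) (A : V) m k :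
  \sum_(j < m) A *+ (j.+1 == k)%N = A *+ (0 < k <= m)%N.
Proof. by case: k => [|k]; [rewrite big1 | rewrite sum_ord_mulrn_eq]. Qed.

Lemma sum_band_mulmx (R : pzSemiRingType) p q m k (X : 'M[R]_(p, q)) :
  \sum_(j < m) ((if (j.+1 == k)%N || (j == k :> nat) then 1%:M else 0) *m X)
  = X *+ ((0 < k <= m) + (k < m))%N.
Proof.
rewrite mulrnDr -sum_ord_mulrn_eqS -sum_ord_mulrn_eq -big_split.
apply: eq_bigr => j _; rewrite (fun_if (mulmx^~ X)) mul1mx mul0mx.
rewrite -!mulrb; case: (j.+1 =P k) => [<-|_] /=.
  by rewrite (ltn_eqF (ltnSn j)) addr0.
by rewrite add0r.
Qed.

Lemma sum_delta_mulmx (R : pzSemiRingType) a b c m (i : 'I_m)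
    (A : 'M[R]_(a, b)) (Y : 'I_m -> 'M[R]_(b, c)) :
  \sum_i' ((if i' == i then A else 0) *m Y i') = A *m Y i.
Proof.
rewrite (bigD1 i) //= eqxx big1 ?addr0 // => j /negPf->.
exact: mul0mx.
Qed.

Lemma glue_row_block_mul (R : comPzSemiRingType) p m nG n c (i : 'I_p)
    (S : 'M[R]_(nG, n)) (Y : 'M[R]_(c, n)) :
  (if (i : nat) == 0%N then S else 0) *m Y^T
    + \sum_(j < m) ((if (j.+1 == i)%N || (j == i :> nat) then 1%:M else 0)
                    *m (Y *m S^T)^T)
  = (S *m Y^T) *+ ((i == 0 :> nat) + ((0 < i <= m) + (i < m)))%N.
Proof.
by rewrite sum_band_mulmx trmx_mul trmxK (fun_if (mulmx^~ _)) mul0mx -mulrb !mulrnDr.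
Qed.

Lemma mulmx_tr_kerF (R : fieldType) m n p (A : 'M[R]_(m, n)) (H : 'M[R]_(p, n)) :
  (A <= kerF H)%MS -> H *m A^T = 0.
Proof. by move/sub_kermxP => AH0; rewrite -[H]trmxK -trmx_mul AH0 trmx0. Qed.

Lemma dual_basis_change (R : comUnitRingType) k n (P : 'M[R]_k) (A B : 'M[R]_(k, n)) :
  P \in unitmx -> A *m B^T = 1%:M -> ((invmx P)^T *m A) *m (P *m B)^T = 1%:M.
Proof.
move=> Punit AB1; rewrite trmx_mul -mulmxA (mulmxA A) AB1 mul1mx.
by rewrite -trmx_mul mulmxV // trmx1.
Qed.

Lemma dual_col_mx_dsub (R : pzRingType) k1 k2 n
    (A1 B1 : 'M[R]_(k1, n)) (A2 B2 : 'M[R]_(k2, n)) :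
  col_mx A1 A2 *m (col_mx B1 B2)^T = 1%:M -> A2 *m B2^T = 1%:M.
Proof.
by rewrite tr_col_mx mul_col_row scalar_mx_block => /eq_block_mx[_ _ _ ->].
Qed.

Section DeformedCodeCommutation.
Variables (R : fieldType) (n rX rZ nG rG dR c : nat).
Variables (HX : 'M[R]_(rX, n)) (HZ : 'M[R]_(rZ, n)) (T : 'M[R]_(rX, rG)).
Variables (HG : 'M[R]_(rG, nG)) (S : 'M[R]_(nG, n)).
Hypothesis char2 : 2%:R = 0 :> R.

Lemma char2_mulr2n (V : lmodType R) (x : V) : x *+ 2 = 0.
Proof. by rewrite -scaler_nat char2 scale0r. Qed.

Lemma HX_MM_mulmx_trJZ_MM (JZC : 'M[R]_(c, n)) :
  HX *m JZC^T = 0 -> HX_MM dR HX T HG *m (JZ_MM nG rG dR JZC)^T = 0.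
Proof.
move=> HX_JZC; rewrite /HX_MM /JZ_MM tr_row_mx trmx0 mul_col_mx !mul_row_col.
rewrite !mulmx0 !addr0 HX_JZC mxcol_mul; apply/eqP; rewrite col_mx_eq0 eqxx /=; apply/eqP.
rewrite -(mxcol0 (p_ := fun=> rG)); apply: eq_mxcol => j.
by rewrite mul_row_col mul0mx mulmx0 addr0.
Qed.

Lemma HZ_MM_mulmx_trJX_MM (JXC : 'M[R]_(c, n)) (gamma : 'M[R]_(c, rG)) :
  HZ *m JXC^T = 0 -> JXC *m S^T = gamma *m HG ->
  HZ_MM dR HZ S HG *m (JX_MM dR JXC S gamma)^T = 0.
Proof.
move=> HZ_JXC gammaP; rewrite /HZ_MM /JX_MM !tr_row_mx mul_col_mx !mul_row_col.
rewrite mul0mx HZ_JXC add0r mxcol_mul; apply/eqP; rewrite col_mx_eq0 eqxx /=; apply/eqP.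
rewrite -(mxcol0 (p_ := fun=> nG)); apply: eq_mxcol => i.
rewrite !tr_mxrow !mul_row_col !mul_mxrow_mxcol addrA glue_row_block_mul sum_delta_mulmx.
rewrite (fun_if trmx) trmx0 (fun_if (mulmx HG^T)) mulmx0 -mulrb.
rewrite -trmx_mul -gammaP trmx_mul trmxK -mulrnDr.
by rewrite (_ : (_ + _)%N = 2) ?char2_mulr2n //; have := ltn_ord i; lia.
Qed.

Lemma JX_MM_mulmx_trJZ_MM (JXC JZC : 'M[R]_(c, n)) (gamma : 'M[R]_(c, rG)) :
  JXC *m JZC^T = 1%:M -> JX_MM dR JXC S gamma *m (JZ_MM nG rG dR JZC)^T = 1%:M.
Proof. by rewrite /JX_MM /JZ_MM tr_row_mx trmx0 mul_row_col mulmx0 addr0. Qed.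

Lemma HX_MB_mulmx_trJZ_MB k (JZ' : 'M[R]_(k, n)) :
  HX *m JZ'^T = 0 -> HX_MB dR HX T HG *m (JZ_MB nG rG dR JZ')^T = 0.
Proof.
move=> HX_JZ'; rewrite /HX_MB /JZ_MB tr_row_mx trmx0 mul_col_mx !mul_row_col.
rewrite !mulmx0 !addr0 HX_JZ' mxcol_mul; apply/eqP; rewrite col_mx_eq0 eqxx /=; apply/eqP.
rewrite -(mxcol0 (p_ := fun=> rG)); apply: eq_mxcol => j.
by rewrite mul_row_col mul0mx mulmx0 addr0.
Qed.

Lemma HZ_MB_mulmx_trJX_MB k (JX' : 'M[R]_(k, n)) :
  HZ *m JX'^T = 0 -> HZ_MB dR HZ S HG *m (JX_MB rG dR JX' S)^T = 0.
Proof.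
move=> HZ_JX'; rewrite /HZ_MB /JX_MB !tr_row_mx trmx0 mul_col_mx !mul_row_col.
rewrite mul0mx HZ_JX' add0r mxcol_mul; apply/eqP; rewrite col_mx_eq0 eqxx /=; apply/eqP.
rewrite -(mxcol0 (p_ := fun=> nG)); apply: eq_mxcol => i.
rewrite !tr_mxrow !mul_row_col mul_mxrow_mxcol mulmx0 addr0 glue_row_block_mul.
by rewrite (_ : (_ + _)%N = 2) ?char2_mulr2n //; have := ltn_ord i; lia.
Qed.

Lemma JX_MB_mulmx_trJZ_MB k (JX' JZ' : 'M[R]_(k, n)) :
  JX' *m JZ'^T = 1%:M -> JX_MB rG dR JX' S *m (JZ_MB nG rG dR JZ')^T = 1%:M.
Proof. by rewrite /JX_MB /JZ_MB tr_row_mx trmx0 mul_row_col mulmx0 addr0. Qed.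

End DeformedCodeCommutation.

Theorem proposition2
  (n rX rZ q c kg nG rG dR : nat)
  (HX : 'M['F_2]_(rX, n)) (HZ : 'M['F_2]_(rZ, n))
  (JX JZ : 'M['F_2]_(q + c, n)) (FX FZ : 'M['F_2]_(kg, n))
  (hkerX : (kerF HX == HZ + JZ + FZ)%MS) (hdirX : mxdirect (HZ + JZ + FZ))
  (hkerZ : (kerF HZ == HX + JX + FX)%MS) (hdirZ : mxdirect (HX + JX + FX))
  (hJ : JX *m JZ^T = 1%:M) (hF : FX *m FZ^T = 1%:M)
  (JZA : 'M['F_2]_(q, n)) (JZC : 'M['F_2]_(c, n))
  (hJZA : row_free JZA) (hJZAsub : (JZA <= JZ)%MS)
  (hbasis_free : row_free (col_mx JZA JZC)) (hbasis_span : (col_mx JZA JZC == JZ)%MS)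
  (Jbar : 'M['F_2]_(q + c)) (hJbar_unit : Jbar \in unitmx)
  (hJbar : col_mx JZA JZC = Jbar *m JZ)
  (JXA : 'M['F_2]_(q, n)) (JXC : 'M['F_2]_(c, n))
  (hJXAC : col_mx JXA JXC = (invmx Jbar)^T *m JX)
  (HG : 'M['F_2]_(rG, nG)) (S : 'M['F_2]_(nG, n)) (T : 'M['F_2]_(rX, rG))
  (hcompat : HX *m S^T = T *m HG)
  (hdR : (2 <= dR)%N) :
  (forall gamma : 'M['F_2]_(c, rG),
     (exists (m : nat) (U : 'M['F_2]_(m, n)),
        (U <= HZ + FZ)%MS /\ (col_mx JZA U == kerF HG *m S)%MS) ->
     JXC *m S^T = gamma *m HG ->
     HX_MM dR HX T HG *m (JZ_MM nG rG dR JZC)^T = 0 /\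
     HZ_MM dR HZ S HG *m (JX_MM dR JXC S gamma)^T = 0 /\
     JX_MM dR JXC S gamma *m (JZ_MM nG rG dR JZC)^T = 1%:M)
  /\
  (HX_MB dR HX T HG *m (JZ_MB nG rG dR (col_mx JZA JZC))^T = 0 /\
   HZ_MB dR HZ S HG *m (JX_MB rG dR (col_mx JXA JXC) S)^T = 0 /\
   JX_MB rG dR (col_mx JXA JXC) S *m (JZ_MB nG rG dR (col_mx JZA JZC))^T = 1%:M).
Proof.
have char2 : 2%:R = 0 :> 'F_2 by exact: pchar_Fp_0.
have JZ_kerHX : (JZ <= kerF HX)%MS.
  case/andP: hkerX => _; apply: submx_trans.
  exact: submx_trans (addsmxSr HZ JZ) (addsmxSl _ _).
have JX_kerHZ : (JX <= kerF HZ)%MS.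
  case/andP: hkerZ => _; apply: submx_trans.
  exact: submx_trans (addsmxSr HX JX) (addsmxSl _ _).
have JZ'_kerHX : (col_mx JZA JZC <= kerF HX)%MS.
  by rewrite hJbar (submx_trans (submxMl _ _)).
have JX'_kerHZ : (col_mx JXA JXC <= kerF HZ)%MS.
  by rewrite hJXAC (submx_trans (submxMl _ _)).
have dual' : col_mx JXA JXC *m (col_mx JZA JZC)^T = 1%:M.
  by rewrite hJXAC hJbar dual_basis_change.
have HX_JZC : HX *m JZC^T = 0.
  by apply: mulmx_tr_kerF; move: JZ'_kerHX; rewrite col_mx_sub => /andP[].
have HZ_JXC : HZ *m JXC^T = 0.
  by apply: mulmx_tr_kerF; move: JX'_kerHZ; rewrite col_mx_sub => /andP[].
split.
  move=> gamma _ gammaP; split; [|split].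
  - exact: HX_MM_mulmx_trJZ_MM.
  - exact: HZ_MM_mulmx_trJX_MM.
  - exact/JX_MM_mulmx_trJZ_MM/dual_col_mx_dsub/dual'.
split; [|split].
- exact/HX_MB_mulmx_trJZ_MB/mulmx_tr_kerF.
- exact/HZ_MB_mulmx_trJX_MB/mulmx_tr_kerF.
- exact: JX_MB_mulmx_trJZ_MB.
Qed.
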